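(* For any pair of positive integers $r_1,r_2$, there exists a strongly connected digraph $G$ such that its inner out-radius is $r^+(G)=r_1$ and its inner in-radius is $r^-(G)=r_2$.
   Context: Digraphs are finite and may have loops and multiple arcs. $\mathrm{dist}_G(u,v)$ is the length of a shortest directed walk from $u$ to $v$ ($\infty$ if none). The inner out-eccentricity of $u$ is $\mathrm{ecc}^+(u)=\max\{\mathrm{dist}_G(u,v): \mathrm{dist}_G(u,v)<\infty\}$ and the inner in-eccentricity is $\mathrm{ecc}^-(u)=\max\{\mathrm{dist}_G(v,u): \mathrm{dist}_G(v,u)<\infty\}$ (maxima over $v\in V(G)$). The inner out-radius is $r^+(G)=\min_{u}\mathrm{ecc}^+(u)$ and the inner in-radius is $r^-(G)=\min_u \mathrm{ecc}^-(u)$. *)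

From mathcomp Require Import all_boot.
Set Implicit Arguments. Unset Strict Implicit. Unset Printing Implicit Defensive.

Record digraph := Digraph {
  dV : finType;
  dE : finType;
  dsrc : dE -> dV;
  dtgt : dE -> dV }.

Fixpoint is_walk (G : digraph) (u v : dV G) (s : seq (dE G)) : Prop :=
  match s with
  | [::] => u = v
  | e :: s' => dsrc e = u /\ is_walk (dtgt e) v s'
  end.

Definition walk_len (G : digraph) (u v : dV G) (k : nat) : Prop :=
  exists s : seq (dE G), size s = k /\ is_walk u v s.

Definition is_dist (G : digraph) (u v : dV G) (d : nat) : Prop :=
  walk_len u v d /\ forall k, walk_len u v k -> d <= k.

Definition ecc_out (G : digraph) (u : dV G) (e : nat) : Prop :=
  (exists v d, is_dist u v d /\ d = e) /\
  (forall v d, is_dist u v d -> d <= e).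

Definition ecc_in (G : digraph) (u : dV G) (e : nat) : Prop :=
  (exists v d, is_dist v u d /\ d = e) /\
  (forall v d, is_dist v u d -> d <= e).

Definition out_radius (G : digraph) (r : nat) : Prop :=
  (exists u : dV G, ecc_out u r) /\ (forall (u : dV G) e, ecc_out u e -> r <= e).

Definition in_radius (G : digraph) (r : nat) : Prop :=
  (exists u : dV G, ecc_in u r) /\ (forall (u : dV G) e, ecc_in u e -> r <= e).

Definition strongly_connected (G : digraph) : Prop :=
  forall u v : dV G, exists k, walk_len u v k.

(* The digraph has a hub c, two "out-spokes" c -> a_0 -> ... -> a_(r1-1) with
   every a_i -> c, and two "in-spokes" b_(r2-1) -> ... -> b_0 -> c with
   c -> every b_j.  From c every vertex is within r1 steps, and every vertex
   reaches c within r2 steps.  Conversely, the depth along an out-spoke grows by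
   at most one per arc, so from a vertex off one out-spoke the tip of that spoke
   is at distance at least r1; having two spokes guarantees that every vertex
   is off one of them.  Dually for the in-spokes, whose depth drops by at most
   one per arc. *)

From mathcomp Require Import all_boot zify.
From Stdlib Require Import Classical Wf_nat.
Set Implicit Arguments. Unset Strict Implicit. Unset Printing Implicit Defensive.

Section Walks.
Variable G : digraph.
Implicit Types (u v w : dV G) (s t : seq (dE G)).

Lemma walk_len_arc (e : dE G) : walk_len (dsrc e) (dtgt e) 1.
Proof. by exists [:: e]. Qed.

Lemma is_walk_cat u w v s t : is_walk u w s -> is_walk w v t -> is_walk u v (s ++ t).
Proof.
elim: s u => [|e s IH] u /=; first by move->.
by case=> Hu Hs Ht; split=> //; apply: IH Hs Ht.
Qed.

Lemma walk_len_cat u w v k l : walk_len u w k -> walk_len w v l -> walk_len u v (k + l).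
Proof.
case=> s [<- Hs] [t [<- Ht]]; exists (s ++ t).
by split; [rewrite size_cat | apply: is_walk_cat Hs Ht].
Qed.

Lemma is_walk_rcons u v s e :
  is_walk u (dsrc e) s -> dtgt e = v -> is_walk u v (rcons s e).
Proof. by rewrite -cats1 => Hs He; apply: is_walk_cat Hs _. Qed.

Lemma walk_len_potential (h : dV G -> nat) :
  (forall e, h (dtgt e) <= (h (dsrc e)).+1) ->
  forall u v k, walk_len u v k -> h v <= h u + k.
Proof.
move=> hE u v k [s [<- Hs]]; elim: s u Hs => [|e s IH] u /=.
  by move->; rewrite addn0.
by case=> <- /IH; have := hE e; lia.
Qed.

Lemma walk_len_dist u v k : walk_len u v k -> exists d, is_dist u v d.
Proof.
move=> Hk; have [d [[Hd d_min] _]] :=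
  dec_inh_nat_subset_has_unique_least_element _ (fun n => classic (walk_len u v n))
    (ex_intro _ k Hk).
by exists d; split=> // n /d_min /leP.
Qed.

Lemma out_radius_hub (c : dV G) (r : nat) :
  strongly_connected G ->
  (forall v, exists2 k, k <= r & walk_len c v k) ->
  (forall u, exists v, forall k, walk_len u v k -> r <= k) ->
  out_radius G r.
Proof.
move=> scG near far.
have dist_hub v d : is_dist c v d -> d <= r.
  by case: (near v) => k le_kr Hk [_ /(_ _ Hk) le_dk]; apply: leq_trans le_dk le_kr.
have far_dist u : exists v d, is_dist u v d /\ r <= d.
  have [v far_v] := far u; have [k /walk_len_dist [d Hd]] := scG u v.
  by exists v, d; split=> //; apply: far_v; case: Hd.
split=> [|u e [_ ecc_e]]; last first.
  by have [v [d [Hd le_rd]]] := far_dist u; apply: leq_trans le_rd (ecc_e _ _ Hd).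
exists c; split=> //; have [v [d [Hd le_rd]]] := far_dist c.
by exists v, d; split=> //; apply/eqP; rewrite eqn_leq (dist_hub _ _ Hd).
Qed.

End Walks.

Definition rev_digraph (G : digraph) : digraph := Digraph (@dtgt G) (@dsrc G).

Lemma is_walk_rev (G : digraph) (u v : dV G) (s : seq (dE G)) :
  is_walk (G := rev_digraph G) u v s -> is_walk v u (rev s).
Proof.
elim: s u => [|e s IH] u /=; first by move->.
by case=> He /IH Hs; rewrite rev_cons; apply: is_walk_rcons Hs He.
Qed.

Lemma walk_len_rev (G : digraph) (u v : dV G) k :
  walk_len (G := rev_digraph G) u v k <-> walk_len v u k.
Proof.
case: G u v => V E src tgt u v.
split=> -[s [<- Hs]]; exists (rev s); rewrite size_rev; split=> //.
  exact: is_walk_rev Hs.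
exact: (is_walk_rev (G := rev_digraph (Digraph src tgt))) Hs.
Qed.

Lemma is_dist_rev (G : digraph) (u v : dV G) d :
  is_dist (G := rev_digraph G) u v d <-> is_dist v u d.
Proof.
rewrite /is_dist walk_len_rev.
by split=> -[Hd d_min]; split=> // k /walk_len_rev /d_min.
Qed.

Lemma ecc_out_rev (G : digraph) (u : dV G) e :
  ecc_out (G := rev_digraph G) u e <-> ecc_in u e.
Proof.
by split=> -[[v [d [Hd <-]]] ecc_max];
  split=> [|w d' /is_dist_rev /ecc_max //]; exists v, d; split=> //; apply/is_dist_rev.
Qed.

Lemma in_radius_hub (G : digraph) (c : dV G) (r : nat) :
  strongly_connected G ->
  (forall v, exists2 k, k <= r & walk_len v c k) ->
  (forall u, exists v : dV G, forall k, walk_len v u k -> r <= k) ->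
  in_radius G r.
Proof.
move=> scG near far; have [[u ecc_u] ecc_min] : out_radius (rev_digraph G) r.
  apply: (@out_radius_hub (rev_digraph G) c) => [u v|v|u].
  - by have [k Hk] := scG v u; exists k; apply/walk_len_rev.
  - by have [k le_kr Hk] := near v; exists k => //; apply/walk_len_rev.
  - by have [v far_v] := far u; exists v => k /walk_len_rev /far_v.
split; first by exists u; apply/ecc_out_rev.
by move=> w e /ecc_out_rev /ecc_min.
Qed.

Definition rel_digraph (V : finType) (adj : rel V) : digraph :=
  Digraph (fun e : {e : V * V | adj e.1 e.2} => (val e).1) (fun e => (val e).2).

Lemma walk_len_rel (V : finType) (adj : rel V) (x y : V) :
  adj x y -> walk_len (G := rel_digraph adj) x y 1.
Proof. by move=> Hxy; apply: (walk_len_arc (G := rel_digraph adj) (exist _ (x, y) Hxy)). Qed.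

Section SpokeGraph.
Variables r1 r2 : nat.
Hypotheses (r1_gt0 : 0 < r1) (r2_gt0 : 0 < r2).

(* [None] is the hub; [Some (inl (b, i))] lies at depth [i + 1] on out-spoke [b]
   and [Some (inr (b, j))] at depth [j + 1] on in-spoke [b]. *)
Definition spoke_vertex : finType := option ((bool * 'I_r1) + (bool * 'I_r2)).

Definition spoke_adj : rel spoke_vertex := fun x y =>
  match x, y with
  | None, Some (inl (_, i)) => val i == 0
  | None, Some (inr _) => true
  | Some (inl (b, i)), Some (inl (b', j)) => (b == b') && (val j == (val i).+1)
  | Some (inl _), None => true
  | Some (inr (b, j)), Some (inr (b', i)) => (b == b') && (val j == (val i).+1)
  | Some (inr (_, j)), None => val j == 0
  | _, _ => false
  end.

Definition spoke_graph : digraph := rel_digraph spoke_adj.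

Definition out_depth (b : bool) (x : spoke_vertex) : nat :=
  if x is Some (inl (b', i)) then (if b' == b then (val i).+1 else 0) else 0.

Definition in_depth (b : bool) (x : spoke_vertex) : nat :=
  if x is Some (inr (b', j)) then (if b' == b then (val j).+1 else 0) else 0.

Lemma out_depth_adj b x y : spoke_adj x y -> out_depth b y <= (out_depth b x).+1.
Proof.
case: x => [[[b1 i]|[b1 i]]|]; case: y => [[[b2 j]|[b2 j]]|] //=.
- by case/andP=> /eqP <- /eqP ->; case: ifP.
- by move=> /eqP ->; case: ifP.
Qed.

Lemma in_depth_adj b x y : spoke_adj x y -> in_depth b x <= (in_depth b y).+1.
Proof.
case: x => [[[b1 i]|[b1 i]]|]; case: y => [[[b2 j]|[b2 j]]|] //=.
- by case/andP=> /eqP <- /eqP ->; case: ifP.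
- by move=> /eqP ->; case: ifP.
Qed.

Lemma walk_len_hub_out b i (lt_i_r1 : i < r1) :
  walk_len (G := spoke_graph) None (Some (inl (b, Ordinal lt_i_r1))) i.+1.
Proof.
elim: i lt_i_r1 => [|i IH] lt_i_r1; first exact: walk_len_rel.
rewrite -[i.+2]addn1; apply: (walk_len_cat (IH (ltnW lt_i_r1))).
by apply: walk_len_rel; rewrite /= !eqxx.
Qed.

Lemma walk_len_in_hub b j (lt_j_r2 : j < r2) :
  walk_len (G := spoke_graph) (Some (inr (b, Ordinal lt_j_r2))) None j.+1.
Proof.
elim: j lt_j_r2 => [|j IH] lt_j_r2; first exact: walk_len_rel.
rewrite -[j.+2]add1n; apply: walk_len_cat (IH (ltnW lt_j_r2)).
by apply: walk_len_rel; rewrite /= !eqxx.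
Qed.

Lemma hub_out_near (v : spoke_vertex) :
  exists2 k, k <= r1 & walk_len (G := spoke_graph) None v k.
Proof.
case: v => [[[b [i lt_i_r1]]|[b j]]|].
- by exists i.+1; last exact: walk_len_hub_out.
- by exists 1; last apply: walk_len_rel.
- by exists 0; last exists [::].
Qed.

Lemma hub_in_near (v : spoke_vertex) :
  exists2 k, k <= r2 & walk_len (G := spoke_graph) v None k.
Proof.
case: v => [[[b i]|[b [j lt_j_r2]]]|].
- by exists 1; last apply: walk_len_rel.
- by exists j.+1; last exact: walk_len_in_hub.
- by exists 0; last exists [::].
Qed.

Lemma spoke_graph_strongly_connected : strongly_connected spoke_graph.
Proof.
move=> u v; have [k _ Hk] := hub_in_near u; have [l _ Hl] := hub_out_near v.
by exists (k + l); apply: walk_len_cat Hk Hl.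
Qed.

Lemma out_spoke_far (u : spoke_vertex) :
  exists v, forall k, walk_len (G := spoke_graph) u v k -> r1 <= k.
Proof.
have [b off_b] : exists b, out_depth b u = 0.
  by exists (if u is Some (inl (b, _)) then ~~ b else true); case: u => [[[[] i]|]|].
have lt_tip : r1.-1 < r1 by rewrite ltn_predL.
have out_depth_arc (e : dE spoke_graph) :
    out_depth b (dtgt e) <= (out_depth b (dsrc e)).+1.
  by case: e => -[x y] /= /out_depth_adj.
exists (Some (inl (b, Ordinal lt_tip))) => k /(walk_len_potential out_depth_arc).
by rewrite off_b /= eqxx prednK.
Qed.

Lemma in_spoke_far (u : spoke_vertex) :
  exists v, forall k, walk_len (G := spoke_graph) v u k -> r2 <= k.
Proof.
have [b off_b] : exists b, in_depth b u = 0.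
  by exists (if u is Some (inr (b, _)) then ~~ b else true); case: u => [[[b' i]|[[] j]]|].
have lt_tip : r2.-1 < r2 by rewrite ltn_predL.
have in_depth_arc (e : dE (rev_digraph spoke_graph)) :
    in_depth b (dtgt e) <= (in_depth b (dsrc e)).+1.
  by case: e => -[x y] /= /in_depth_adj.
exists (Some (inr (b, Ordinal lt_tip))) => k.
move=> /walk_len_rev /(walk_len_potential in_depth_arc).
by rewrite off_b /= eqxx prednK.
Qed.

End SpokeGraph.

Theorem proposition2p5 (r1 r2 : nat) :
  0 < r1 -> 0 < r2 ->
  exists G : digraph,
    strongly_connected G /\ out_radius G r1 /\ in_radius G r2.
Proof.
move=> r1_gt0 r2_gt0; exists (spoke_graph r1 r2).
have scG := spoke_graph_strongly_connected r1_gt0 r2_gt0.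
split=> //; split.
- exact: out_radius_hub scG (hub_out_near r1_gt0) (out_spoke_far r1_gt0).
- exact: in_radius_hub scG (hub_in_near r2_gt0) (in_spoke_far r2_gt0).
Qed.
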